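(* Let $H$ be a complex reductive group, let $V$ be a finite-dimensional $H$-module and let $v\in V$. The following are equivalent: (1) the span of $Hv$ is $V$; (2) there is no nontrivial one-parameter subgroup of $S:=\operatorname{GL}(V)^H$ which fixes $v$; (3) $v$ is generic.
   Context: Let $V=\bigoplus_{i=1}^k n_iV_i$ be the isotypic decomposition, $V_i$ pairwise non-isomorphic irreducible $H$-modules. Then $\operatorname{GL}(V)^H$ (the $H$-equivariant invertible linear maps) is $\operatorname{GL}(n_1)\times\dots\times\operatorname{GL}(n_k)$. Write $v=(v_{ij})$ with $v_{ij}$ in the $j$th copy of $V_i$ (identified with $V_i$), $j=1,\dots,n_i$. Let $U_i\subset V_i$ be the span of $v_{i1},\dots,v_{in_i}$. The vector $v$ is called generic if $\dim U_i=n_i$ for all $i$. *)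

From HB Require Import structures.
From mathcomp Require Import all_boot all_order all_algebra.
From mathcomp Require Import reals complex.
Set Implicit Arguments. Unset Strict Implicit. Unset Printing Implicit Defensive.
Import Order.TTheory GRing.Theory Num.Theory.
Local Open Scope ring_scope.

Section Defs.
Variables (F : fieldType) (n : nat).

(* V = F^n as row vectors; a linear group G (the image of H in GL(V)),
   acting on the right: v |-> v *m g. *)
Definition mat_group (G : 'M[F]_n -> Prop) : Prop :=
  [/\ G 1%:M,
      (forall g h, G g -> G h -> G (g *m h)) &
      (forall g, G g -> g \in unitmx /\ G (invmx g))].

Definition invariant (G : 'M[F]_n -> Prop) (U : 'M[F]_n) : Prop :=
  forall g, G g -> stablemx U g.

(* every submodule has an invariant complement (H reductive) *)
Definition compl_reducible (G : 'M[F]_n -> Prop) : Prop :=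
  forall U : 'M[F]_n, invariant G U ->
    exists W : 'M[F]_n, [/\ invariant G W, mxdirect (U + W) & row_full (U + W)].

Definition irreducible_sub (G : 'M[F]_n -> Prop) (M : 'M[F]_n) : Prop :=
  [/\ invariant G M, (0 < \rank M)%N &
      forall U : 'M[F]_n, invariant G U -> (U <= M)%MS ->
        \rank U = 0%N \/ (U == M)%MS].

Definition giso (G : 'M[F]_n -> Prop) (M M' f : 'M[F]_n) : Prop :=
  [/\ (M *m f :=: M')%MS, \rank (M *m f) = \rank M &
      forall g, G g -> M *m g *m f = M *m f *m g].

Definition isomorphic (G : 'M[F]_n -> Prop) (M M' : 'M[F]_n) : Prop :=
  exists f, giso G M M' f.

(* Isotypic decomposition V = (+)_{i<k} (+)_{j < mult i} comp i j, where
   comp i j is the j-th copy of the irreducible V_i (model i, an irreducible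
   submodule of V), identified with V_i via the H-isomorphism ident i j;
   the V_i are pairwise non-isomorphic. *)
Definition isotypic_decomposition (G : 'M[F]_n -> Prop) (k : nat)
    (mult : 'I_k -> nat) (comp : forall i, 'I_(mult i) -> 'M[F]_n)
    (model : 'I_k -> 'M[F]_n) (ident : forall i, 'I_(mult i) -> 'M[F]_n) : Prop :=
  (forall i, (0 < mult i)%N) /\
  (forall i, irreducible_sub G (model i)) /\
  (forall i j, irreducible_sub G (comp i j)) /\
  (forall i j, giso G (comp i j) (model i) (ident i j)) /\
  (forall i i', i != i' -> ~ isomorphic G (model i) (model i')) /\
  (\sum_(i < k) \sum_(j < mult i) \rank (comp i j))%N = n /\
  row_full (\sum_(i < k) \sum_(j < mult i) comp i j)%MS.

(* v is generic: writing v = sum v_ij (v_ij in the j-th copy of V_i) and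
   identifying v_ij with an element of V_i, the span U_i of the v_ij
   (j < n_i) has dimension n_i. *)
Definition generic (k : nat) (mult : 'I_k -> nat)
    (comp : forall i, 'I_(mult i) -> 'M[F]_n)
    (ident : forall i, 'I_(mult i) -> 'M[F]_n) (v : 'rV[F]_n) : Prop :=
  forall w : forall i, 'I_(mult i) -> 'rV[F]_n,
    (forall i j, (w i j <= comp i j)%MS) ->
    v = \sum_(i < k) \sum_(j < mult i) w i j ->
    forall i, \rank (\matrix_(j < mult i) (w i j *m ident i j)) = mult i.

Definition spans (G : 'M[F]_n -> Prop) (v : 'rV[F]_n) : Prop :=
  forall U : 'M[F]_n, (forall g, G g -> (v *m g <= U)%MS) -> row_full U.

(* one-parameter subgroup of GL(V): a morphism of algebraic groups
   F^* -> GL(V), i.e. a group homomorphism whose matrix entries are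
   Laurent polynomials in t (values at t = 0 are irrelevant). *)
Definition laurent_mx (lam : F -> 'M[F]_n) : Prop :=
  exists (N : nat) (P : 'M[{poly F}]_n),
    forall t, t != 0 -> lam t = t ^- N *: map_mx (fun p => p.[t]) P.

Definition one_param_subgroup (lam : F -> 'M[F]_n) : Prop :=
  [/\ laurent_mx lam, lam 1 = 1%:M &
      forall s t, s != 0 -> t != 0 -> lam (s * t) = lam s *m lam t].

Definition in_commutant (G : 'M[F]_n -> Prop) (lam : F -> 'M[F]_n) : Prop :=
  forall t, t != 0 -> forall g, G g -> lam t *m g = g *m lam t.

Definition nontrivial_1ps (lam : F -> 'M[F]_n) : Prop :=
  exists t, t != 0 /\ lam t != 1%:M.

Definition fixes (lam : F -> 'M[F]_n) (v : 'rV[F]_n) : Prop :=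
  forall t, t != 0 -> v *m lam t = v.

Definition no_fixing_1ps (G : 'M[F]_n -> Prop) (v : 'rV[F]_n) : Prop :=
  ~ exists lam : F -> 'M[F]_n,
      [/\ one_param_subgroup lam, in_commutant G lam, nontrivial_1ps lam
        & fixes lam v].

End Defs.

(* [v] spans [V] iff no nonzero [H]-equivariant endomorphism kills [v]: the
   kernel of such a map is a submodule containing [H v], and conversely a
   proper submodule containing [H v] has an invariant complement, whose
   projection kills [v]. A nontrivial one-parameter subgroup [lam] of
   [GL(V)^H] fixing [v] gives the map [lam t - 1]; conversely the dilations
   [x + y |-> x + t y] along such a complement form one. If [v] is not generic,
   a relation [sum_j c_j v_ij = 0] in some [V_i] gives the nonzero equivariant
   map [sum_j c_j p_ij] killing [v]. Conversely, cut a nonzero equivariant map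
   killing [v] down to one with irreducible image [M]; by Schur's lemma it acts
   on the j-th copy of [V_i] as [c_j] times one isomorphism onto [M] and
   vanishes on the other isotypic components, so [sum_j c_j v_ij = 0]. *)

From HB Require Import structures.
From mathcomp Require Import all_boot all_order all_algebra.
From mathcomp Require Import reals complex zify.
From Stdlib Require Import Classical.
Import GRing.Theory Num.Theory.
Local Open Scope ring_scope.
Set Implicit Arguments. Unset Strict Implicit. Unset Printing Implicit Defensive.

Section RowSpaces.
Variables (F : fieldType) (n : nat).

Lemma eq_mulmx_rowspace m (X : 'M[F]_(m, n)) (f h : 'M[F]_n) :
  (forall x : 'rV_n, (x <= X)%MS -> x *m f = x *m h) -> X *m f = X *m h.
Proof. by move=> E; apply/row_matrixP => i; rewrite !row_mul E ?row_sub. Qed.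

Lemma submx_mulmx_eq m p (X : 'M[F]_(m, n)) (Y : 'M[F]_(p, n)) (f h : 'M[F]_n) :
  (Y <= X)%MS -> X *m f = X *m h -> Y *m f = Y *m h.
Proof. by move=> /submxP[D ->] E; rewrite -!mulmxA E. Qed.

Lemma addsmx_decomp (X W : 'M[F]_n) (x : 'rV[F]_n) : row_full (X + W)%MS ->
  exists a b, [/\ (a <= X)%MS, (b <= W)%MS & x = a + b].
Proof.
move=> /(submx_full x) /sub_addsmxP[u ->].
by exists (u.1 *m X), (u.2 *m W); rewrite !submxMl.
Qed.

Lemma proj_mx_addE (X W : 'M[F]_n) (a b : 'rV[F]_n) :
  (X :&: W = 0)%MS -> (a <= X)%MS -> (b <= W)%MS -> (a + b) *m proj_mx X W = a.
Proof. by move=> XW0 aX bW; rewrite mulmxDl proj_mx_id // proj_mx_0 // addr0. Qed.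

Lemma row_free_coef_eq0 m (A : 'M[F]_(m, n)) (c : 'I_m -> F) :
  row_free A -> \sum_j c j *: row j A = 0 -> forall j, c j = 0.
Proof.
move=> freeA c0 j; have : (\row_j c j) *m A = 0 *m A.
  by rewrite mul0mx -c0 mulmx_sum_row; apply: eq_bigr => i _; rewrite mxE.
by move/(row_free_inj freeA)/rowP/(_ j); rewrite !mxE.
Qed.

Lemma row_dependence m (A : 'M[F]_(m, n)) : ~~ row_free A ->
  exists2 c : 'I_m -> F, exists j, c j != 0 & \sum_j c j *: row j A = 0.
Proof.
rewrite -kermx_eq0 => /rowV0Pn[u /sub_kermxP uA u0].
exists (fun j => u 0 j); last by rewrite -mulmx_sum_row.
have [j uj|u00] := pickP (fun j => u 0 j != 0); first by exists j.
case/eqP: u0; apply/rowP => j; rewrite mxE; exact/eqP/negbFE/u00.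
Qed.

Lemma rowspace_exists (K : 'rV[F]_n -> Prop) : K 0 ->
  (forall a b, K a -> K b -> K (a + b)) -> (forall c b, K b -> K (c *: b)) ->
  exists X : 'M[F]_n, forall y, (y <= X)%MS <-> K y.
Proof.
move=> K0 KD KZ.
suff [X [XK KX]] : exists X : 'M[F]_n,
    (forall y, (y <= X)%MS -> K y) /\ (forall y, K y -> (y <= X)%MS).
  by exists X => y; split; [apply: XK | apply: KX].
have grow d (Y : 'M[F]_n) : (n - \rank Y <= d)%N -> (forall y, (y <= Y)%MS -> K y) ->
    exists X : 'M[F]_n,
      (forall y, (y <= X)%MS -> K y) /\ (forall y, K y -> (y <= X)%MS).
  elim: d Y => [|d IHd] Y rkY YK.
    exists Y; split=> // y _; apply: submx_full.
    by rewrite /row_full eqn_leq rank_leq_col /=; lia.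
  have [KY|] := classic (forall y, K y -> (y <= Y)%MS); first by exists Y.
  move=> /not_all_ex_not[y /(imply_to_and (K y))[Ky /negP yY]].
  apply: (IHd (Y + y)%MS).
    have : (\rank Y < \rank (Y + y)%MS)%N.
      by apply: rank_ltmx; rewrite ltmxE addsmxSl addsmx_sub negb_and yY orbT.
    by have := rank_leq_col (Y + y)%MS; lia.
  move=> z /sub_addsmxP[u ->]; apply: KD; first by apply/YK/submxMl.
  by rewrite [u.2]mx11_scalar mul_scalar_mx; apply: KZ.
by apply: (grow n 0) => [|y]; rewrite ?leq_subr // submx0 => /eqP ->.
Qed.

End RowSpaces.

Section Equivariance.
Variables (F : fieldType) (n : nat) (G : 'M[F]_n -> Prop).

Definition equivariant (T : 'M[F]_n) := forall g, G g -> g *m T = T *m g.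

Definition equivariant_on (M f : 'M[F]_n) :=
  forall g, G g -> M *m g *m f = M *m f *m g.

Lemma equivariantM (S T : 'M[F]_n) :
  equivariant S -> equivariant T -> equivariant (S *m T).
Proof. by move=> eqS eqT g Gg; rewrite mulmxA eqS // -!mulmxA eqT. Qed.

Lemma equivariant_sum (I : finType) (c : I -> F) (T_ : I -> 'M[F]_n) :
  (forall i, equivariant (T_ i)) -> equivariant (\sum_i c i *: T_ i).
Proof.
move=> eqT g Gg; rewrite mulmx_sumr mulmx_suml; apply: eq_bigr => i _.
by rewrite -scalemxAr -scalemxAl eqT.
Qed.

Lemma invariant_submx (X : 'M[F]_n) m (Y : 'M[F]_(m, n)) g :
  invariant G X -> G g -> (Y <= X)%MS -> (Y *m g <= X)%MS.
Proof. by move=> invX Gg YX; apply: submx_trans (submxMr g YX) (invX g Gg). Qed.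

Lemma invariant_sums (I : finType) (P : pred I) (B : I -> 'M[F]_n) :
  (forall i, invariant G (B i)) -> invariant G (\sum_(i | P i) B i)%MS.
Proof.
move=> invB g Gg; apply: (big_ind (fun X : 'M_n => stablemx X g)) => //.
- by rewrite mul0mx sub0mx.
- by move=> X Y; apply: stableDmx.
- by move=> i _; apply: invB.
Qed.

Lemma equivariant_image (T : 'M[F]_n) : equivariant T -> invariant G T.
Proof. by move=> eqT g Gg; rewrite -eqT // submxMl. Qed.

Definition compl_submod (X W : 'M[F]_n) :=
  [/\ invariant G X, invariant G W, (X :&: W = 0)%MS & row_full (X + W)%MS].

Lemma compl_submodC (X W : 'M[F]_n) : compl_submod X W -> compl_submod W X.
Proof. by case=> invX invW XW0 fullXW; split; rewrite // (capmxC, addsmxC). Qed.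

Lemma proj_mx_equivariant (X W : 'M[F]_n) :
  compl_submod X W -> equivariant (proj_mx X W).
Proof.
move=> [invX invW XW0 fullXW] g Gg; apply/eqP/mulmxP => x.
have [a [b [aX bW ->]]] := addsmx_decomp x fullXW.
rewrite mulmxA mulmxDl proj_mx_addE ?(invariant_submx invX) ?(invariant_submx invW) //.
by rewrite mulmxA proj_mx_addE.
Qed.

Lemma equivariant_on_sub (M M' f : 'M[F]_n) :
  equivariant_on M f -> (M' <= M)%MS -> equivariant_on M' f.
Proof.
by move=> eqf M'M g Gg; rewrite -!mulmxA; apply: (submx_mulmx_eq M'M); rewrite !mulmxA eqf.
Qed.

Lemma equivariant_onW (M T : 'M[F]_n) : equivariant T -> equivariant_on M T.
Proof. by move=> eqT g Gg; rewrite -!mulmxA eqT. Qed.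

Lemma equivariant_onM (M f h : 'M[F]_n) :
  equivariant_on M f -> equivariant_on (M *m f) h -> equivariant_on M (f *m h).
Proof. by move=> eqf eqh g Gg; rewrite !mulmxA eqf // eqh. Qed.

Lemma equivariantM_on (M P f : 'M[F]_n) :
  equivariant P -> (P <= M)%MS -> equivariant_on M f -> equivariant (P *m f).
Proof.
move=> eqP PM eqf g Gg; rewrite mulmxA eqP // -!mulmxA.
by apply: (submx_mulmx_eq PM); rewrite !mulmxA eqf.
Qed.

Lemma invariant_image_on (M h : 'M[F]_n) :
  invariant G M -> equivariant_on M h -> invariant G (M *m h).
Proof. by move=> invM eqh g Gg; rewrite -eqh // submxMr ?invM. Qed.

Lemma invariant_cap_kermx (M h : 'M[F]_n) :
  invariant G M -> equivariant_on M h -> invariant G (M :&: kermx h)%MS.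
Proof.
move=> invM eqh g Gg; rewrite sub_capmx (invariant_submx invM) ?capmxSl //=.
apply/sub_kermxP; rewrite (equivariant_on_sub eqh (capmxSl _ _)) //.
by rewrite (sub_kermxP (capmxSr _ _)) mul0mx.
Qed.

End Equivariance.

Section Isomorphisms.
Variables (F : fieldType) (n : nat) (G : 'M[F]_n -> Prop).

Lemma irreducible_giso (M M' f : 'M[F]_n) :
  irreducible_sub G M -> irreducible_sub G M' -> equivariant_on G M f ->
  (M *m f <= M')%MS -> M *m f != 0 -> giso G M M' f.
Proof.
move=> [invM _ irrM] [_ _ irrM'] eqf MfM' Mf0.
have rk_Mf : \rank (M *m f) = \rank M.
  have [rk0|/eqmxP MK] := irrM _ (invariant_cap_kermx invM eqf) (capmxSl _ _).
    by rewrite -(mxrank_mul_ker M f) rk0 addn0.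
  have /sub_kermxP Mf0' : (M <= kermx f)%MS by rewrite -MK capmxSr.
  by rewrite Mf0' eqxx in Mf0.
split=> //; have [/eqP|/eqmxP //] := irrM' _ (invariant_image_on invM eqf) MfM'.
by rewrite mxrank_eq0 (negbTE Mf0).
Qed.

Lemma giso_inj (M M' f : 'M[F]_n) (x : 'rV[F]_n) :
  giso G M M' f -> (x <= M)%MS -> x *m f = 0 -> x = 0.
Proof.
move=> [_ rk_Mf _] xM xf0; apply/eqP; rewrite -submx0.
have : \rank (M :&: kermx f)%MS = 0%N by have := mxrank_mul_ker M f; rewrite rk_Mf; lia.
move/eqP; rewrite mxrank_eq0 => /eqP <-.
by rewrite sub_capmx xM; apply/sub_kermxP.
Qed.

Lemma giso_comp (A B C f h : 'M[F]_n) :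
  giso G A B f -> giso G B C h -> giso G A C (f *m h).
Proof.
move=> [AfB rk_f eqf] [BhC rk_h eqh]; split.
- by rewrite mulmxA; apply: eqmx_trans (eqmxMr h AfB) BhC.
- by rewrite mulmxA (eqmxMr h AfB) rk_h -AfB rk_f.
- by apply: equivariant_onM eqf (equivariant_on_sub eqh _); rewrite AfB.
Qed.

(* Inverse of [f] on [M]: [pinvmx] reads off coordinates in the basis
   [row_base M *m f] of [M *m f]. *)
Definition inviso (M f : 'M[F]_n) := pinvmx (row_base M *m f) *m row_base M.

Section Inverse.
Variables (M M' f : 'M[F]_n).
Hypotheses (invM : invariant G M) (isof : giso G M M' f).

Let baseMf : (row_base M *m f :=: M')%MS.
Proof. by case: isof => MfM' _ _; apply: eqmx_trans (eqmxMr f (eq_row_base M)) MfM'. Qed.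

Lemma inviso_mulK (x : 'rV[F]_n) : (x <= M)%MS -> x *m f *m inviso M f = x.
Proof.
have free_Mf : row_free (row_base M *m f).
  by case: isof => _ rk_f _; rewrite /row_free (eqmxMr f (eq_row_base M)) rk_f.
rewrite -(eq_row_base M) => /submxP[D ->].
by rewrite /inviso mulmxA -(mulmxA D) -(mulmxA D) mulmxVp // mulmx1.
Qed.

Lemma mul_invisoK (y : 'rV[F]_n) : (y <= M')%MS -> y *m inviso M f *m f = y.
Proof. by move=> yM'; rewrite /inviso mulmxA -(mulmxA _ _ f) mulmxKpV ?baseMf. Qed.

Lemma giso_inviso : giso G M' M (inviso M f).
Proof.
have M'M : (M' *m inviso M f :=: M)%MS.
  apply/eqmxP/andP; split.
    by rewrite /inviso mulmxA (submx_trans (submxMl _ _)) ?eq_row_base.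
  apply/row_subP => i; rewrite -(inviso_mulK (row_sub i M)) submxMr //.
  by case: isof => MfM' _ _; rewrite -MfM' -row_mul row_sub.
split=> //; first by case: isof => MfM' rk_f _; rewrite M'M -rk_f MfM'.
case: isof => _ _ eqf g Gg.
rewrite -[LHS]mulmxA -[RHS]mulmxA; apply: eq_mulmx_rowspace => y yM'.
have yfM : (y *m inviso M f <= M)%MS by rewrite -M'M submxMr.
rewrite [RHS]mulmxA; move: (mul_invisoK yM') yfM.
move: (y *m inviso M f) => x <- xM.
have fgE : x *m (f *m g) = x *m (g *m f).
  by apply: (submx_mulmx_eq xM); rewrite !mulmxA eqf.
rewrite mulmxA -(mulmxA x f g) fgE (mulmxA x g f) inviso_mulK //.
exact: invariant_submx invM Gg xM.
Qed.

End Inverse.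
End Isomorphisms.

Section Schur.
Variables (F : closedFieldType) (n : nat) (G : 'M[F]_n -> Prop).

Lemma schur_scalar (M E : 'M[F]_n) : irreducible_sub G M -> equivariant_on G M E ->
  (M *m E <= M)%MS -> exists c, forall y : 'rV_n, (y <= M)%MS -> y *m E = c *: y.
Proof.
move=> [invM rkM irrM] eqE ME_M.
pose B := row_base M; pose ER := B *m E *m pinvmx B.
have ER_B : ER *m B = B *m E by rewrite mulmxKpV // eq_row_base (eqmxMr E (eq_row_base M)).
have [c] : exists c, root (char_poly ER) c.
  by apply/closed_rootP; rewrite size_char_poly eqSS -lt0n.
rewrite -eigenvalue_root_char => /eigenvalueP[u uER u0].
exists c; pose K := (M :&: kermx (E - c%:M))%MS.
have eqEc : equivariant_on G M (E - c%:M).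
  move=> g Gg; rewrite !mulmxBr !mul_mx_scalar eqE //.
  by rewrite mulmxBl -scalemxAl.
have uBK : (u *m B <= K)%MS.
  rewrite sub_capmx (submx_trans (submxMl u B)) ?eq_row_base //=.
  apply/sub_kermxP.
  by rewrite mulmxBr -mulmxA -ER_B mulmxA uER mul_mx_scalar -scalemxAl subrr.
have uB0 : u *m B != 0.
  apply: contra u0 => /eqP uB0; apply/eqP/(row_free_inj (row_base_free M)).
  by rewrite mul0mx.
have [/eqP|/eqmxP MK] := irrM K (invariant_cap_kermx invM eqEc) (capmxSl _ _).
  by rewrite mxrank_eq0 => /eqP K0; move: uBK; rewrite K0 submx0 (negbTE uB0).
move=> y; rewrite -MK sub_capmx => /andP[_ /sub_kermxP].
by rewrite mulmxBr mul_mx_scalar => /eqP; rewrite subr_eq0 => /eqP.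
Qed.

Lemma giso_hom_scalar (M M' f h : 'M[F]_n) : irreducible_sub G M -> giso G M M' f ->
  equivariant_on G M h -> (M *m h <= M')%MS ->
  exists c, forall y : 'rV_n, (y <= M)%MS -> y *m h = c *: (y *m f).
Proof.
move=> irrM isof eqh MhM'; have [invM _ _] := irrM.
have [M'f'M _ eqf'] := giso_inviso invM isof.
have eqhf' : equivariant_on G M (h *m inviso M f).
  by apply: equivariant_onM eqh (equivariant_on_sub eqf' _).
have [|c hc] := schur_scalar irrM eqhf'; first by rewrite -M'f'M mulmxA submxMr.
exists c => y yM; rewrite -(mul_invisoK isof (submx_trans (submxMr h yM) MhM')).
by rewrite -(mulmxA y h) hc // scalemxAl.
Qed.

End Schur.

Section Components.
Variables (F : fieldType) (n : nat) (G : 'M[F]_n -> Prop).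
Unset Implicit Arguments.
Variables (k : nat) (mult : 'I_k -> nat) (comp : forall i, 'I_(mult i) -> 'M[F]_n).
Set Implicit Arguments.

Definition comp_index := {i : 'I_k & 'I_(mult i)}.
Definition copy_of i (j : 'I_(mult i)) : comp_index := Tagged _ j.
Definition component (s : comp_index) := comp (tag s) (tagged s).
Definition component_proj (s : comp_index) :=
  proj_mx (component s) (\sum_(t | t != s) component t)%MS.

Lemma copy_of_inj i (j j' : 'I_(mult i)) : (copy_of j == copy_of j') = (j == j').
Proof. exact: eq_Tagged. Qed.

Lemma big_comp_index (R : Type) (idx : R) (op : Monoid.com_law idx)
    (X : forall i, 'I_(mult i) -> R) :
  \big[op/idx]_(i < k) \big[op/idx]_(j < mult i) X i j =
  \big[op/idx]_(s : comp_index) X (tag s) (tagged s).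
Proof. exact: (sig_big_dep xpredT (fun _ => xpredT)). Qed.

Hypotheses (invC : forall i j, invariant G (comp i j))
  (rkC : (\sum_(i < k) \sum_(j < mult i) \rank (comp i j))%N = n)
  (fullC : row_full (\sum_(i < k) \sum_(j < mult i) comp i j)%MS).

Let full_components : row_full (\sum_s component s)%MS.
Proof. by move: fullC; rewrite big_comp_index. Qed.

Let component_cap_others s : (component s :&: \sum_(t | t != s) component t)%MS = 0.
Proof.
have direct : mxdirect (\sum_s component s)%MS.
  rewrite mxdirectE /= (eqP full_components).
  by move: rkC; rewrite big_comp_index => ->.
by move/mxdirect_sumsP: direct; apply.
Qed.

Lemma component_proj_id s (y : 'rV_n) :
  (y <= component s)%MS -> y *m component_proj s = y.
Proof. exact: proj_mx_id. Qed.

Lemma component_proj_eq0 s t (y : 'rV_n) :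
  t != s -> (y <= component t)%MS -> y *m component_proj s = 0.
Proof. by move=> ts yt; apply: proj_mx_0 => //; apply: (sumsmx_sup t). Qed.

Lemma component_proj_sub s (y : 'rV_n) : (y *m component_proj s <= component s)%MS.
Proof. exact: proj_mx_sub. Qed.

Lemma component_proj_equivariant s : equivariant G (component_proj s).
Proof.
apply: proj_mx_equivariant; split; rewrite ?component_cap_others //.
- exact: invC.
- by apply: invariant_sums => t; apply: invC.
- by move: full_components; rewrite (bigD1 s).
Qed.

Lemma component_proj_sum (w : comp_index -> 'rV_n) t :
  (forall s, (w s <= component s)%MS) -> (\sum_s w s) *m component_proj t = w t.
Proof.
move=> wC; rewrite mulmx_suml (bigD1 t) //= component_proj_id // big1 ?addr0 //.
by move=> s st; apply: component_proj_eq0 st (wC s).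
Qed.

Lemma sum_component_proj (x : 'rV_n) : x = \sum_s x *m component_proj s.
Proof.
have /sub_sumsmxP[u ->] := submx_full x full_components.
by apply: eq_bigr => t _; rewrite component_proj_sum // => s; apply: submxMl.
Qed.

Lemma sum_copies (x : 'rV_n) :
  x = \sum_(i < k) \sum_(j < mult i) x *m component_proj (copy_of j).
Proof. by rewrite big_comp_index -sum_component_proj. Qed.

Lemma component_proj_copy (w : forall i, 'I_(mult i) -> 'rV_n) i j :
  (forall i j, (w i j <= comp i j)%MS) ->
  (\sum_(i < k) \sum_(j < mult i) w i j) *m component_proj (copy_of j) = w i j.
Proof.
move=> wC; rewrite big_comp_index.
by apply: (component_proj_sum (w := fun s => w (tag s) (tagged s))) => s; apply: wC.
Qed.

Lemma component_mulmx_neq0 (T : 'M[F]_n) : T != 0 ->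
  exists s, component s *m T != 0.
Proof.
move=> T0; apply/existsP; apply: contraR T0 => /existsPn CT0.
apply/mulmxP => x; rewrite mulmx0 (sum_component_proj x) mulmx_suml big1 // => s _.
have CsT : component s *m T = component s *m 0.
  by rewrite mulmx0; apply/eqP/negbNE/CT0.
by rewrite (submx_mulmx_eq (component_proj_sub s x) CsT) mulmx0.
Qed.

End Components.

Section Dilations.
Variables (F : fieldType) (n : nat).

Definition dilation (X W : 'M[F]_n) (t : F) := proj_mx X W + t *: proj_mx W X.

Variables (X W : 'M[F]_n).
Hypotheses (XW0 : (X :&: W = 0)%MS) (fullXW : row_full (X + W)%MS).

Lemma dilation_addE t (a b : 'rV[F]_n) :
  (a <= X)%MS -> (b <= W)%MS -> (a + b) *m dilation X W t = a + t *: b.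
Proof.
move=> aX bW; have WX0 : (W :&: X = 0)%MS by rewrite capmxC.
by rewrite mulmxDr proj_mx_addE // -scalemxAr [a + b]addrC proj_mx_addE.
Qed.

Lemma dilation_fix t (x : 'rV[F]_n) : (x <= X)%MS -> x *m dilation X W t = x.
Proof. by move=> xX; rewrite -[x]addr0 dilation_addE ?sub0mx // scaler0. Qed.

Lemma one_param_subgroup_dilation : one_param_subgroup (dilation X W).
Proof.
split.
- exists 0%N, (\matrix_(a, b) ((proj_mx X W a b)%:P + (proj_mx W X a b)%:P * 'X)).
  move=> t _; rewrite expr0 invr1 scale1r; apply/matrixP => a b.
  by rewrite !mxE hornerD hornerM hornerC hornerX hornerC mulrC.
- apply/eqP/mulmxP => x; have [a [b [aX bW ->]]] := addsmx_decomp x fullXW.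
  by rewrite dilation_addE // scale1r mulmx1.
- move=> s t _ _; apply/eqP/mulmxP => x.
  have [a [b [aX bW ->]]] := addsmx_decomp x fullXW.
  by rewrite mulmxA !dilation_addE ?scalemx_sub // scalerA mulrC.
Qed.

Lemma dilation_eq1 t : t != 1 -> dilation X W t = 1%:M -> W = 0.
Proof.
move=> t1 dil1; apply/eqP; rewrite -submx0; apply/row_subP => i.
have wW := row_sub i W; rewrite submx0.
have : (0 + row i W) *m dilation X W t = row i W by rewrite dil1 mulmx1 add0r.
rewrite dilation_addE ?sub0mx // add0r => /eqP.
by rewrite -subr_eq0 -{2}[row i W]scale1r -scalerBl scaler_eq0 subr_eq0 (negbTE t1).
Qed.

End Dilations.


Section Spanning.
Variables (F : fieldType) (n : nat) (G : 'M[F]_n -> Prop).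
Hypotheses (groupG : mat_group G) (reducibleG : compl_reducible G).

Lemma invariant_span_sub (v : 'rV[F]_n) (U : 'M[F]_n) :
  (forall g, G g -> (v *m g <= U)%MS) ->
  exists X : 'M[F]_n, [/\ invariant G X, (v <= X)%MS & (X <= U)%MS].
Proof.
have [G1 GM _] := groupG; move=> vGU.
have [X XK] : exists X : 'M[F]_n,
    forall y : 'rV_n, (y <= X)%MS <-> forall g, G g -> (y *m g <= U)%MS.
  apply: rowspace_exists.
  - by move=> g _; rewrite mul0mx sub0mx.
  - by move=> a b aU bU g Gg; rewrite mulmxDl addmx_sub ?aU ?bU.
  - by move=> c b bU g Gg; rewrite -scalemxAl scalemx_sub ?bU.
have rowK i : forall g, G g -> (row i X *m g <= U)%MS by apply/XK/row_sub.
exists X; split.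
- move=> g Gg; apply/row_subP => i; rewrite row_mul; apply/XK => h Gh.
  by rewrite -mulmxA; apply/rowK/GM.
- exact/XK.
- by apply/row_subP => i; rewrite -[row i X]mulmx1 rowK.
Qed.

Lemma irreducible_sub_exists (Y : 'M[F]_n) : invariant G Y -> (0 < \rank Y)%N ->
  exists2 M, irreducible_sub G M & (M <= Y)%MS.
Proof.
have [r] := ubnP (\rank Y); elim: r Y => // r IHr Y rkY invY rkY0.
have [irrY|not_irrY] := classic (irreducible_sub G Y); first by exists Y.
have [U [invU UY rkU UneY]] : exists U, [/\ invariant G U, (U <= Y)%MS,
    \rank U <> 0%N & ~~ (U == Y)%MS].
  apply: NNPP => noU; apply: not_irrY; split=> // U invU UY.
  have [|rkU] := eqVneq (\rank U) 0%N; [by left | right].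
  by apply/negPn/negP => UneY; apply: noU; exists U; split=> //; apply/eqP.
have ltUY : (\rank U < \rank Y)%N by apply: rank_ltmx; rewrite ltmxEneq UneY UY.
have [rkUr rkU0] : (\rank U < r /\ 0 < \rank U)%N by lia.
have [M irrM MU] := IHr U rkUr invU rkU0.
by exists M => //; apply: submx_trans MU UY.
Qed.

Lemma spans_equivariant_eq0 (v : 'rV[F]_n) (T : 'M[F]_n) :
  spans G v -> equivariant G T -> v *m T = 0 -> T = 0.
Proof.
move=> spanv eqT vT0; have fullK : row_full (kermx T).
  apply: spanv => g Gg; apply/sub_kermxP.
  by rewrite -mulmxA eqT // mulmxA vT0 mul0mx.
by apply: (row_full_inj fullK); rewrite mulmx_ker mulmx0.
Qed.

Lemma nonspanning_split (v : 'rV[F]_n) : ~ spans G v ->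
  exists X W : 'M[F]_n, [/\ compl_submod G X W, (v <= X)%MS & W != 0].
Proof.
move=> /not_all_ex_not[U /(imply_to_and (forall g, G g -> _))[vGU notfullU]].
have [X [invX vX XU]] := invariant_span_sub vGU.
have [W [invW /mxdirect_addsP XW0 fullXW]] := reducibleG invX.
exists X, W; split=> //.
apply/eqP => W0; apply: notfullU; rewrite -sub1mx (submx_trans _ XU) // sub1mx.
by move: fullXW; rewrite /row_full W0 addsmx0.
Qed.

Lemma spans_no_fixing_1ps (v : 'rV[F]_n) : spans G v -> no_fixing_1ps G v.
Proof.
move=> spanv [lam [_ lamG [t [t0 lam_t1]] fixv]]; case/eqP: lam_t1.
apply/eqP; rewrite -subr_eq0; apply/eqP/(spans_equivariant_eq0 spanv).
  by move=> g Gg; rewrite mulmxBr mulmxBl mulmx1 mul1mx lamG.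
by rewrite mulmxBr mulmx1 fixv ?subrr.
Qed.

Lemma dilation_equivariant (X W : 'M[F]_n) t :
  compl_submod G X W -> equivariant G (dilation X W t).
Proof.
move=> cXW g Gg; rewrite mulmxDl mulmxDr -scalemxAl -scalemxAr.
by rewrite (proj_mx_equivariant cXW) // (proj_mx_equivariant (compl_submodC cXW)).
Qed.

Lemma no_fixing_1ps_spans (v : 'rV[F]_n) (t0 : F) :
  t0 != 0 -> t0 != 1 -> no_fixing_1ps G v -> spans G v.
Proof.
move=> t00 t01 nofix; apply: NNPP => nspan.
have [X [W [cXW vX W0]]] := nonspanning_split nspan.
have [_ _ XW0 fullXW] := cXW.
apply: nofix; exists (dilation X W); split.
- exact: one_param_subgroup_dilation.
- by move=> t _ g Gg; rewrite (dilation_equivariant _ cXW).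
- by exists t0; split=> //; apply: contra W0 => /eqP/(dilation_eq1 XW0 t01) ->.
- by move=> t _; apply: dilation_fix.
Qed.

End Spanning.

Section Generic.
Variables (F : closedFieldType) (n : nat) (G : 'M[F]_n -> Prop).
Unset Implicit Arguments.
Variables (k : nat) (mult : 'I_k -> nat) (comp : forall i, 'I_(mult i) -> 'M[F]_n)
  (model : 'I_k -> 'M[F]_n) (ident : forall i, 'I_(mult i) -> 'M[F]_n).
Hypothesis decG : isotypic_decomposition G comp model ident.

Let irr_comp i j : irreducible_sub G (comp i j).
Proof. by case: decG => _ [_ [irrC _]]. Qed.

Let inv_comp i j : invariant G (comp i j).
Proof. by case: (irr_comp i j). Qed.

Let irr_model i : irreducible_sub G (model i).
Proof. by case: decG => _ [irrM _]. Qed.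

Let iso_ident i j : giso G (comp i j) (model i) (ident i j).
Proof. by case: decG => _ [_ [_ [isoC _]]]. Qed.

Let noniso i i' : i != i' -> ~ isomorphic G (model i) (model i').
Proof. by case: decG => _ [_ [_ [_ [nonisoM _]]]]; apply: nonisoM. Qed.

Let rk_comp : (\sum_(i < k) \sum_(j < mult i) \rank (comp i j))%N = n.
Proof. by case: decG => _ [_ [_ [_ [_ []]]]]. Qed.

Let full_comp : row_full (\sum_(i < k) \sum_(j < mult i) comp i j)%MS.
Proof. by case: decG => _ [_ [_ [_ [_ []]]]]. Qed.

Let proj_equivariant := component_proj_equivariant inv_comp rk_comp full_comp.
Let proj_id := component_proj_id rk_comp full_comp.
Let proj_eq0 := component_proj_eq0 rk_comp full_comp.
Set Implicit Arguments.

(* The rows span the paper's U_i: row [j] is the component of [v] in the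
   [j]-th copy of V_i, carried to [model i] by [ident i j]. *)
Definition coord_mx (v : 'rV[F]_n) i :=
  \matrix_(j < mult i) (v *m component_proj comp (copy_of j) *m ident i j).

Lemma genericP (v : 'rV[F]_n) :
  generic comp ident v <-> forall i, row_free (coord_mx v i).
Proof.
split=> [gen i | free w wC ev i].
  apply/eqP; apply: (gen (fun i j => v *m component_proj comp (copy_of j))).
    by move=> i' j; apply: component_proj_sub.
  exact: sum_copies.
suff -> : \matrix_(j < mult i) (w i j *m ident i j) = coord_mx v i by apply/eqP/free.
by apply/row_matrixP => j; rewrite !rowK ev component_proj_copy.
Qed.

Lemma spans_generic (v : 'rV[F]_n) : spans G v -> generic comp ident v.
Proof.
move=> spanv; apply/genericP => i; apply: contraT => /row_dependence[c [j0 cj0] c0].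
pose T := \sum_j c j *: (component_proj comp (copy_of j) *m ident i j).
have eqT : equivariant G T.
  apply: equivariant_sum => j; have [_ _ eq_ident] := iso_ident i j.
  apply: equivariantM_on (proj_equivariant _) _ eq_ident.
  by rewrite -[component_proj _ _]mul1mx proj_mx_sub.
have vT0 : v *m T = 0.
  by rewrite -c0 mulmx_sumr; apply: eq_bigr => j _; rewrite rowK -scalemxAr mulmxA.
have CT : comp i j0 *m T = comp i j0 *m (c j0 *: ident i j0).
  apply: eq_mulmx_rowspace => y yC; rewrite mulmx_sumr (bigD1 j0) //= big1 ?addr0.
    by rewrite -!scalemxAr mulmxA proj_id.
  move=> j jj0; rewrite -scalemxAr mulmxA (proj_eq0 (copy_of j) (copy_of j0)) //.
    by rewrite mul0mx scaler0.
  by rewrite copy_of_inj eq_sym.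
move: CT; rewrite (spans_equivariant_eq0 spanv eqT vT0) mulmx0 -scalemxAr.
move=> /esym/eqP; rewrite scalemx_eq0 (negbTE cj0) /= -mxrank_eq0.
have [_ rk_ident _] := iso_ident i j0; have [_ rkC _] := irr_comp i j0.
by rewrite rk_ident => /eqP rk0; rewrite rk0 in rkC.
Qed.

Lemma generic_irreducible_annihilator (v : 'rV[F]_n) (M T : 'M[F]_n) :
  generic comp ident v -> irreducible_sub G M -> equivariant G T ->
  (T <= M)%MS -> v *m T = 0 -> T = 0.
Proof.
move=> /genericP free irrM eqT TM vT0; apply/eqP; apply: contraT => T0.
have [[i j0] CT0] := component_mulmx_neq0 rk_comp full_comp T0.
have imT (X : 'M[F]_n) : (X *m T <= M)%MS by apply: submx_trans (submxMl X T) TM.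
have isoT i' j : comp i' j *m T != 0 -> giso G (comp i' j) M T.
  move=> CT0'; apply: irreducible_giso (irr_comp i' j) irrM _ (imT _) CT0'.
  exact: equivariant_onW.
pose chi := inviso (comp i j0) (ident i j0) *m T.
have iso_chi : giso G (model i) M chi.
  exact: giso_comp (giso_inviso (inv_comp i j0) (iso_ident i j0)) (isoT i j0 CT0).
have [inv_model _ _] := irr_model i.
have other i' j : i' != i -> comp i' j *m T = 0.
  move=> i'i; apply/eqP; apply: contraT => CT0'; case: (noniso i' i i'i).
  exists (inviso (comp i' j) (ident i' j) *m T *m inviso (model i) chi).
  apply: giso_comp (giso_inviso inv_model iso_chi).
  exact: giso_comp (giso_inviso (inv_comp i' j) (iso_ident i' j)) (isoT i' j CT0').
have /fin_all_exists[c Tc] j : exists c : F, forall y : 'rV_n,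
    (y <= comp i j)%MS -> y *m T = c *: (y *m (ident i j *m chi)).
  apply: giso_hom_scalar (irr_comp i j) _ (equivariant_onW _ eqT) (imT _).
  exact: giso_comp (iso_ident i j) iso_chi.
have sum0 : \sum_j c j *: row j (coord_mx v i) = 0.
  apply: (giso_inj iso_chi).
    apply: summx_sub => j _; rewrite scalemx_sub // rowK.
    by have [<- _ _] := iso_ident i j; rewrite submxMr // component_proj_sub.
  transitivity (\sum_(j < mult i) v *m component_proj comp (copy_of j) *m T).
    rewrite mulmx_suml; apply: eq_bigr => j _.
    by rewrite rowK -scalemxAl (Tc j) ?component_proj_sub // !mulmxA.
  rewrite -[RHS]vT0 [X in _ = X *m _](sum_copies rk_comp full_comp v) mulmx_suml.
  rewrite (bigD1 i) //= mulmx_suml [X in _ + X]big1 ?addr0 // => i' i'i.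
  rewrite mulmx_suml big1 // => j _.
  have /submxP[D ->] : (v *m component_proj comp (copy_of j) <= comp i' j)%MS.
    exact: component_proj_sub.
  by rewrite -mulmxA other // mulmx0.
have cj0 := row_free_coef_eq0 (free i) sum0 j0.
case/negP: CT0; apply/eqP; rewrite -[RHS](mulmx0 _ (comp i j0)).
apply: eq_mulmx_rowspace => y yC.
by rewrite (Tc j0) // cj0 scale0r mulmx0.
Qed.

Lemma generic_equivariant_eq0 (v : 'rV[F]_n) (T : 'M[F]_n) :
  compl_reducible G -> generic comp ident v -> equivariant G T -> v *m T = 0 -> T = 0.
Proof.
move=> reducibleG gen eqT vT0; apply/eqP; apply: contraT => T0.
have [M irrM MT] : exists2 M, irreducible_sub G M & (M <= T)%MS.
  by apply: irreducible_sub_exists (equivariant_image eqT) _; rewrite lt0n mxrank_eq0.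
have [invM rkM _] := irrM.
have [C [invC /mxdirect_addsP MC0 fullMC]] := reducibleG M invM.
have eqTP : equivariant G (T *m proj_mx M C).
  by apply: equivariantM eqT (proj_mx_equivariant _); split.
have TP0 : T *m proj_mx M C = 0.
  apply: generic_irreducible_annihilator gen irrM eqTP _ _.
    by rewrite proj_mx_sub.
  by rewrite mulmxA vT0 mul0mx.
have /submxP[D MD] := MT; move: rkM.
by rewrite -(proj_mx_id MC0 (submx_refl M)) {1}MD -mulmxA TP0 mulmx0 mxrank0.
Qed.

Lemma generic_spans (v : 'rV[F]_n) : mat_group G -> compl_reducible G ->
  generic comp ident v -> spans G v.
Proof.
move=> groupG reducibleG gen; apply: NNPP => nspan.
have [X [W [cXW vX W0]]] := nonspanning_split groupG reducibleG nspan.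
have [_ _ XW0 _] := cXW; have WX0 : (W :&: X = 0)%MS by rewrite capmxC.
have eqP : equivariant G (proj_mx W X) := proj_mx_equivariant (compl_submodC cXW).
have P0 := generic_equivariant_eq0 reducibleG gen eqP (proj_mx_0 WX0 vX).
by move: W0; rewrite -(proj_mx_id WX0 (submx_refl W)) P0 mulmx0 eqxx.
Qed.

End Generic.

Theorem proposition2p7 (R : realType) (n : nat) (G : 'M[R[i]]_n -> Prop) :
  mat_group G -> compl_reducible G ->
  forall (k : nat) (mult : 'I_k -> nat)
         (comp : forall i, 'I_(mult i) -> 'M[R[i]]_n)
         (model : 'I_k -> 'M[R[i]]_n)
         (ident : forall i, 'I_(mult i) -> 'M[R[i]]_n),
  isotypic_decomposition G comp model ident ->
  forall v : 'rV[R[i]]_n,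
    (spans G v <-> no_fixing_1ps G v) /\
    (no_fixing_1ps G v <-> generic comp ident v).
Proof.
move=> groupG reducibleG k mult comp model ident decG v.
have nofix_spans : no_fixing_1ps G v -> spans G v.
  apply: (no_fixing_1ps_spans groupG reducibleG (t0 := 2)).
  - by rewrite pnatr_eq0.
  - by rewrite pnatr_eq1.
split; split.
- exact: spans_no_fixing_1ps.
- exact: nofix_spans.
- by move/nofix_spans/(spans_generic decG).
- by move/(generic_spans decG groupG reducibleG)/spans_no_fixing_1ps.
Qed.
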